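(* Let $N\subset Q^4$ be a null line containing a real point $[p\wedge pj]$. Then $N$ corresponds to a set of two-spheres in $\mathbb{HP}^1$ mutually touching at $p\mathbb{H}$: every non-real point of $N$ is a two-sphere through $p\mathbb{H}$, any two of them touch at $p\mathbb{H}$, and for any two-sphere $\sigma\in N$ the set of two-spheres touching $\sigma$ at $p\mathbb{H}$, together with the point $[p\wedge pj]$, is $N$.
   Context: $\mathbb{H}$ denotes the quaternions, $\mathbb{C}=\mathrm{span}_{\mathbb{R}}\{1,i\}$; $\mathbb{H}^2$ is a right $\mathbb{H}$-vector space identified with $\mathbb{C}^4$; $\mathbb{HP}^1=\{v\mathbb{H}\}\cong S^4$; the twistor fibre over $v\mathbb{H}$ is the line of $\mathbb{CP}^3=\mathbb{P}(\mathbb{C}^4)$ through $[v],[vj]$. $Q^4=\{[\alpha]\in\mathbb{P}(\Lambda^2\mathbb{C}^4):\alpha\wedge\alpha=0\}$, $[v\wedge w]$ identified with the line through $[v],[w]$. The antilinear extension of $v\wedge w\mapsto vj\wedge wj$ gives a real structure $j$ on $Q^4$ whose real points are the twistor fibres $[v\wedge vj]$; every non-real point is the twistor lift $\mathbb{P}\{v:(\sigma)v=vi\}$ of a round two-sphere $\sigma=\{l:(\sigma)l=l\}$ with conformal structure, $(\sigma)\in\mathrm{End}_{\mathbb{H}}(\mathbb{H}^2)$, $(\sigma)^2=-1$. A null line is a projective line contained in $Q^4$. Two two-spheres $\sigma,\sigma'$ through $p\mathbb{H}$ touch at $p\mathbb{H}$ if, for some basis $\{p,e_2\}$ of $\mathbb{H}^2$,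 the matrices of $(\sigma),(\sigma')$ are $\begin{pmatrix}R&H\\0&N\end{pmatrix}$, $\begin{pmatrix}R&H'\\0&N\end{pmatrix}$ with the same $R,N$ (parallel planes with the same conformal structure in the chart with $p\mathbb{H}=\infty$). *)

(* Model: H^2 = C^4 (column vectors), right multiplication
   by j is the antilinear map Jv below, right mult. by complex scalars is
   scalar multiplication. Lambda^2 C^4 = skew-symmetric 4x4 matrices. *)
From HB Require Import structures.
From mathcomp Require Import all_boot all_order all_algebra.
Set Implicit Arguments. Unset Strict Implicit. Unset Printing Implicit Defensive.
Import Order.TTheory GRing.Theory Num.Theory.
Local Open Scope ring_scope.

Section Twistor.
Variable C : numClosedFieldType.

Definition vec := 'cV[C]_4.

(* matrix of the antilinear map v |-> v j : (z1,z2,z3,z4) |-> (-conj z2, conj z1, -conj z4, conj z3) *)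
Definition Jmx : 'M[C]_4 :=
  \matrix_(i < 4, k < 4)
    (if (val i == 0%N) && (val k == 1%N) then -1
     else if (val i == 1%N) && (val k == 0%N) then 1
     else if (val i == 2%N) && (val k == 3%N) then -1
     else if (val i == 3%N) && (val k == 2%N) then 1 else 0).

Definition Jv (v : vec) : vec := Jmx *m map_mx Num.conj v.

(* quaternions q = a + b j, a b in C *)
Definition quat := (C * C)%type.
Definition qi : quat := ('i, 0).

Definition rmul (v : vec) (q : quat) : vec := q.1 *: v + Jv (q.2 *: v).

Definition hline (v : vec) : vec -> Prop := fun x => exists q, x = rmul v q.

Definition hlinear (S : 'M[C]_4) : Prop :=
  forall v q, S *m rmul v q = rmul (S *m v) q.

(* round two-sphere with conformal structure, given by (sigma) *)
Definition sphere (S : 'M[C]_4) : Prop := hlinear S /\ S *m S = - 1%:M.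

Definition through (S : 'M[C]_4) (p : vec) : Prop :=
  forall x, hline p x <-> (exists y, hline p y /\ x = S *m y).

Definition hbasis (p e : vec) : Prop :=
  forall x, exists! qq : quat * quat, x = rmul p qq.1 + rmul e qq.2.

Definition touches (S S' : 'M[C]_4) (p : vec) : Prop :=
  exists e, hbasis p e /\ exists R N H H' : quat,
    [/\ S *m p = rmul p R, S *m e = rmul p H + rmul e N,
        S' *m p = rmul p R & S' *m e = rmul p H' + rmul e N].

Definition skew (a : 'M[C]_4) : Prop := a^T = - a.
Definition wedge (v w : vec) : 'M[C]_4 := v *m w^T - w *m v^T.
(* alpha /\ alpha = 2 Pf(alpha) e1234 *)
Definition pf (a : 'M[C]_4) : C :=
  a 0 1 * a 2%:R 3%:R - a 0 2%:R * a 1 3%:R + a 0 3%:R * a 1 2%:R.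

Definition proj_eq (a b : 'M[C]_4) : Prop :=
  a != 0 /\ exists c : C, c != 0 /\ a = c *: b.

(* real structure j: antilinear extension of v/\w |-> vj /\ wj *)
Definition realstr (a : 'M[C]_4) : 'M[C]_4 := Jmx *m map_mx Num.conj a *m Jmx^T.
Definition is_real_pt (a : 'M[C]_4) : Prop := proj_eq (realstr a) a.

(* the projective line N through [a],[b] is a null line *)
Definition null_line (a b : 'M[C]_4) : Prop :=
  [/\ skew a, skew b,
      (forall x y : C, x *: a + y *: b = 0 -> x = 0 /\ y = 0)
    & forall x y : C, pf (x *: a + y *: b) = 0].

Definition onN (a b g : 'M[C]_4) : Prop :=
  g != 0 /\ exists x y : C, g = x *: a + y *: b.

(* [g] is the twistor twlift P{v : (sigma) v = v i} of sigma *)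
Definition twlift (S : 'M[C]_4) (g : 'M[C]_4) : Prop :=
  exists v w : vec,
    [/\ (forall x y : C, x *: v + y *: w = 0 -> x = 0 /\ y = 0),
        (forall u, S *m u = rmul u qi <-> exists x y : C, u = x *: v + y *: w)
      & proj_eq g (wedge v w)].

End Twistor.

From Pilot Require Import Defs.
From HB Require Import structures.
From mathcomp Require Import all_boot all_order all_algebra ring.
Set Implicit Arguments. Unset Strict Implicit. Unset Printing Implicit Defensive.
Import Order.TTheory GRing.Theory Num.Theory.
Local Open Scope ring_scope.

(* Write pi = [p /\ pj].  As N is null and contains pi, N is spanned by pi and a
   decomposable point c = [u /\ w] with pf_polar pi c = 0, i.e. with p, pj, u, w linearly
   dependent; so the line of c meets the twistor fibre pH in some x, and
   N = {[x /\ (s xj + t y)]}, the real point being t = 0.  For t <> 0 the point is the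
   twistor lift of the sphere acting by i on x and z = s xj + t y (and by -i on xj, zj);
   it preserves xH = pH.  Two such z differ, up to a factor, by a multiple of xj, which
   is the touching condition in the basis {p, z}.  Conversely a sphere touching one of
   them agrees with it on pH and, since its square is -1, maps z to zi plus a multiple
   of xj; it is then the sphere of z + beta xj for a suitable beta. *)

Lemma ord4_cases (P : 'I_4 -> Prop) : P 0 -> P 1 -> P 2%:R -> P 3%:R -> forall i, P i.
Proof.
move=> P0 P1 P2 P3 [[|[|[|[|i]]]] lt_i4] //.
- by rewrite (_ : Ordinal _ = 0) //; apply/val_inj.
- by rewrite (_ : Ordinal _ = 1) //; apply/val_inj.
- by rewrite (_ : Ordinal _ = 2%:R) //; apply/val_inj.
- by rewrite (_ : Ordinal _ = 3%:R) //; apply/val_inj.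
Qed.

Lemma sum_ord4 (R : nmodType) (F : 'I_4 -> R) : \sum_i F i = F 0 + F 1 + F 2%:R + F 3%:R.
Proof.
rewrite !big_ord_recr big_ord0 /= add0r.
by congr (_ + _ + _ + _); congr F; apply/val_inj.
Qed.

Lemma wedgeE (C : numClosedFieldType) (v w : 'cV[C]_4) i j :
  wedge v w i j = v i 0 * w j 0 - w i 0 * v j 0.
Proof. by rewrite !mxE !big_ord1 !mxE. Qed.

Ltac entrywise := apply/matrixP=> ? ?; rewrite !(wedgeE, mxE); ring.

Lemma mulmx_cV_ext (R : pzRingType) m n (A B : 'M[R]_(m, n)) :
  (forall v : 'cV_n, A *m v = B *m v) -> A = B.
Proof.
move=> eqAB; apply/matrixP=> i j.
by have := congr1 (fun v : 'cV[R]_m => v i 0) (eqAB (delta_mx j 0)); rewrite -!colE !mxE.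
Qed.

Section Quaternionic.
Variable C : numClosedFieldType.
Local Notation vec := 'cV[C]_4.
Local Notation J := (@Jv C).

Definition span2 (V : lmodType C) (u v w : V) := exists s t : C, w = s *: u + t *: v.

Definition indep2 (V : lmodType C) (u v : V) :=
  forall s t : C, s *: u + t *: v = 0 -> s = 0 /\ t = 0.

Definition indep4 (u1 u2 u3 u4 : vec) := forall m1 m2 m3 m4 : C,
  m1 *: u1 + m2 *: u2 + m3 *: u3 + m4 *: u4 = 0 -> [/\ m1 = 0, m2 = 0, m3 = 0 & m4 = 0].

Lemma map_conj_Jmx : map_mx Num.conj (Jmx C) = Jmx C.
Proof.
apply/matrixP=> i k; rewrite !mxE.
by do 4?case: ifP => _; rewrite ?(conjCN1, conjC1, conjC0).
Qed.

Lemma Jmx_sqr : Jmx C *m Jmx C = - 1%:M.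
Proof.
apply/matrixP=> i k; rewrite !mxE sum_ord4 !mxE.
by elim/ord4_cases: i; elim/ord4_cases: k => /=; ring.
Qed.

Lemma JvD (u v : vec) : J (u + v) = J u + J v.
Proof. by rewrite /Jv map_mxD mulmxDr. Qed.

Lemma JvZ c (v : vec) : J (c *: v) = c^* *: J v.
Proof. by rewrite /Jv map_mxZ scalemxAr. Qed.

Lemma JvK (v : vec) : J (J v) = - v.
Proof.
rewrite /Jv map_mxM map_conj_Jmx mulmxA Jmx_sqr mulNmx mul1mx.
by congr (- _); apply/matrixP=> i j; rewrite !mxE; exact: conjCK.
Qed.

Lemma Jv0 : J 0 = 0.
Proof. by rewrite /Jv map_mx0 mulmx0. Qed.

Lemma rmulE (v : vec) (q : quat C) : rmul v q = q.1 *: v + q.2^* *: J v.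
Proof. by rewrite /rmul JvZ. Qed.

Lemma rmulDl (u v : vec) q : rmul (u + v) q = rmul u q + rmul v q.
Proof. by rewrite !rmulE JvD; entrywise. Qed.

Lemma rmul_qi (v : vec) : rmul v (qi C) = 'i *: v.
Proof. by rewrite rmulE /= conjC0 scale0r addr0. Qed.

Lemma hlinearP (S : 'M[C]_4) : hlinear S <-> forall v, S *m J v = J (S *m v).
Proof.
split=> [S_hlin v | S_J v q]; last by rewrite !rmulE mulmxDr -!scalemxAr S_J.
by have := S_hlin v (0, 1); rewrite !rmulE /= conjC1 !scale0r !add0r !scale1r.
Qed.

Lemma normsq2_eq0 (c d : C) : c * c^* + d * d^* = 0 -> c = 0 /\ d = 0.
Proof.
move/eqP; rewrite paddr_eq0 ?mul_conjC_ge0 // !mul_conjC_eq0.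
by case/andP => /eqP -> /eqP ->.
Qed.

Lemma Jv_indep (x : vec) : x != 0 -> indep2 x (J x).
Proof.
move=> x_neq0 m1 m2 dep.
have Jdep := congr1 J dep; rewrite JvD !JvZ JvK Jv0 in Jdep.
have : (m1 * m1^* + m2 * m2^*) *: x = 0.
  rewrite (_ : _ *: x = m1^* *: (m1 *: x + m2 *: J x) - m2 *: (m1^* *: J x + m2^* *: - x)).
    by rewrite dep Jdep !scaler0 subr0.
  by entrywise.
by move/eqP; rewrite scaler_eq0 (negbTE x_neq0) orbF => /eqP /normsq2_eq0.
Qed.

(* The C-span of x, xj is the quaternionic line xH, which is closed under j. *)
Lemma dependent4_span (x y : vec) m1 m2 m3 m4 : x != 0 ->
  ~~ [&& m1 == 0, m2 == 0, m3 == 0 & m4 == 0] ->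
  m1 *: x + m2 *: J x + m3 *: y + m4 *: J y = 0 -> span2 x (J x) y.
Proof.
move=> x_neq0 m_neq0 dep; set n := m3 * m3^* + m4 * m4^*.
have [n0|n_neq0] := eqVneq n 0.
  have [m30 m40] := normsq2_eq0 n0; rewrite m30 m40 !scale0r !addr0 in dep.
  have [m10 m20] := Jv_indep x_neq0 dep.
  by move: m_neq0; rewrite m10 m20 m30 m40 eqxx.
have Jdep := congr1 J dep; rewrite !JvD !JvZ !JvK Jv0 in Jdep.
exists (- (m3^* * m1 + m4 * m2^*) / n), (- (m3^* * m2 - m4 * m1^*) / n).
apply: (scalerI n_neq0); apply/subr0_eq.
rewrite (_ : _ - _ = m3^* *: (m1 *: x + m2 *: J x + m3 *: y + m4 *: J y)
   - m4 *: (m1^* *: J x + m2^* *: - x + m3^* *: J y + m4^* *: - y)).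
  by rewrite dep Jdep !scaler0 subr0.
by apply/matrixP=> ? ?; rewrite !mxE /n; field.
Qed.

Lemma rmul_inj (v : vec) : v != 0 -> injective (rmul v).
Proof.
move=> v_neq0 [q1 q2] [q1' q2'] eq_q; rewrite !rmulE /= in eq_q.
have [/eqP e1 /eqP e2] : q1 - q1' = 0 /\ q2^* - q2'^* = 0.
  apply: (Jv_indep v_neq0).
  rewrite (_ : _ + _ = (q1 *: v + q2^* *: J v) - (q1' *: v + q2'^* *: J v)).
    by rewrite eq_q subrr.
  by entrywise.
move: e1 e2; rewrite !subr_eq0 => /eqP -> /eqP e2.
by rewrite -[q2]conjCK e2 conjCK.
Qed.

Lemma indep4_neq0 (u1 u2 u3 u4 : vec) : indep4 u1 u2 u3 u4 -> u1 != 0.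
Proof.
move=> u_indep; apply/eqP => u10.
have [/eqP] : [/\ (1 : C) = 0, (0 : C) = 0, (0 : C) = 0 & (0 : C) = 0].
  by apply: u_indep; rewrite u10 !scaler0 !scale0r !addr0.
by rewrite oner_eq0.
Qed.

Lemma hlinear_hline_agree (S S' : 'M[C]_4) (v u : vec) : hlinear S -> hlinear S' ->
  S *m v = S' *m v -> hline v u -> S *m u = S' *m u.
Proof. by move=> S_hlin S'_hlin Sv [q ->]; rewrite S_hlin S'_hlin Sv. Qed.

End Quaternionic.

Section Wedge.
Variable C : numClosedFieldType.
Local Notation vec := 'cV[C]_4.
Local Notation J := (@Jv C).

Lemma wedgeZl c (v w : vec) : wedge (c *: v) w = c *: wedge v w.
Proof. by entrywise. Qed.
Lemma wedgeZr c (v w : vec) : wedge v (c *: w) = c *: wedge v w.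
Proof. by entrywise. Qed.
Lemma wedgeNr (v w : vec) : wedge v (- w) = - wedge v w.
Proof. by entrywise. Qed.
Lemma wedgeDl (u v w : vec) : wedge (u + v) w = wedge u w + wedge v w.
Proof. by entrywise. Qed.
Lemma wedgeDr (u v w : vec) : wedge u (v + w) = wedge u v + wedge u w.
Proof. by entrywise. Qed.
Lemma wedgexx (v : vec) : wedge v v = 0.
Proof. by entrywise. Qed.
Lemma wedgeC (v w : vec) : wedge w v = - wedge v w.
Proof. by entrywise. Qed.

Lemma wedge_neq0P (v w : vec) : indep2 v w <-> wedge v w != 0.
Proof.
split=> [vw_indep | vw_neq0 s t dep].
  apply/eqP => vw0; have [v0|/cV0Pn [i vi_neq0]] := eqVneq v 0.
    have [/eqP] : (1 : C) = 0 /\ (0 : C) = 0.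
      by apply: vw_indep; rewrite v0 scaler0 scale0r addr0.
    by rewrite oner_eq0.
  have [_ /eqP] : w i 0 = 0 /\ - v i 0 = 0.
    apply: vw_indep; apply/matrixP=> k l; rewrite (ord1 l).
    by move/matrixP: vw0 => /(_ k i); rewrite wedgeE !mxE => <-; ring.
  by rewrite oppr_eq0 (negbTE vi_neq0).
have dep_l : wedge (s *: v + t *: w) w = s *: wedge v w.
  by rewrite wedgeDl !wedgeZl wedgexx scaler0 addr0.
have dep_r : wedge v (s *: v + t *: w) = t *: wedge v w.
  by rewrite wedgeDr !wedgeZr wedgexx scaler0 add0r.
have wedge0l : wedge 0 w = 0 by entrywise.
have wedge0r : wedge v 0 = 0 by entrywise.
move: dep_l dep_r; rewrite dep wedge0l wedge0r => /esym/eqP + /esym/eqP.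
by rewrite !scaler_eq0 (negbTE vw_neq0) !orbF => /eqP -> /eqP ->.
Qed.

(* Coefficients of x on v, w by Cramer's rule on a non-vanishing 2x2 minor of v /\ w. *)
Lemma wedge_eq_span (x z v w : vec) :
  wedge x z = wedge v w -> wedge x z != 0 -> span2 v w x.
Proof.
move=> xz_vw /matrix0Pn [j [j' minor_neq0]].
have minorE a b : x a 0 * z b 0 - z a 0 * x b 0 = v a 0 * w b 0 - w a 0 * v b 0.
  by move/matrixP: xz_vw => /(_ a b); rewrite !wedgeE.
rewrite wedgeE minorE in minor_neq0; set G := _ - _ in minor_neq0.
exists ((x j 0 * w j' 0 - x j' 0 * w j 0) / G), ((x j' 0 * v j 0 - x j 0 * v j' 0) / G).
apply/matrixP=> i l; rewrite (ord1 l) !mxE.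
have cramer : x i 0 * G = (x j 0 * w j' 0 - x j' 0 * w j 0) * v i 0
                          + (x j' 0 * v j 0 - x j 0 * v j' 0) * w i 0.
  rewrite /G -minorE.
  transitivity (x j 0 * (x i 0 * z j' 0 - z i 0 * x j' 0)
                - x j' 0 * (x i 0 * z j 0 - z i 0 * x j 0)); first by ring.
  by rewrite !minorE; ring.
by rewrite -[LHS](mulfK minor_neq0) cramer; field.
Qed.

Lemma realstr_wedge (v w : vec) : realstr (wedge v w) = wedge (J v) (J w).
Proof.
rewrite /realstr /wedge /Jv map_mxB !map_mxM -!map_trmx !trmx_mul mulmxBr mulmxBl.
by rewrite !mulmxA.
Qed.

Lemma realstrZ (c : C) M : realstr (c *: M) = c^* *: realstr M.
Proof. by rewrite /realstr map_mxZ -scalemxAr -scalemxAl. Qed.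

Lemma skew_diag (g : 'M[C]_4) (i : 'I_4) : Defs.skew g -> g i i = 0.
Proof.
move=> /matrixP /(_ i i); rewrite !mxE => /eqP.
by rewrite -subr_eq0 opprK -mulr2n mulrn_eq0 /= => /eqP.
Qed.

Lemma skew_sym (g : 'M[C]_4) (i j : 'I_4) : Defs.skew g -> g j i = - g i j.
Proof. by move=> /matrixP /(_ i j); rewrite !mxE. Qed.

(* Each instance is either a ring identity or +-[pf g]. *)
Lemma skew_plucker (g : 'M[C]_4) : Defs.skew g -> pf g = 0 ->
  forall i j k l, g k l * g j i = g k j * g l i - g k i * g l j.
Proof.
rewrite /pf => sk_g pf_g i j k l; move: pf_g.
set E := (X in X = 0 -> _) => pf_g.
have S r s : g s r = - g r s by exact: skew_sym.
apply/eqP; rewrite -subr_eq0; apply/eqP.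
elim/ord4_cases: i; elim/ord4_cases: j; elim/ord4_cases: k; elim/ord4_cases: l;
  rewrite ?(skew_diag _ sk_g) ?(S 0 1) ?(S 0 2%:R) ?(S 0 3%:R) ?(S 1 2%:R) ?(S 1 3%:R)
          ?(S 2%:R 3%:R);
  first [ by ring | by rewrite -pf_g /E; ring | by rewrite -oppr0 -pf_g /E; ring ].
Qed.

Lemma pf0_wedge (g : 'M[C]_4) : Defs.skew g -> pf g = 0 -> g != 0 ->
  exists v w : vec, g = wedge v w.
Proof.
move=> sk_g pf_g /matrix0Pn [j [i gji_neq0]].
exists ((g j i)^-1 *: col j g), (col i g); apply/matrixP=> k l.
by rewrite wedgeZl mxE wedgeE !mxE -(skew_plucker sk_g pf_g) mulrC mulfK.
Qed.

Definition pf_polar (a b : 'M[C]_4) : C :=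
  a 0 1 * b 2%:R 3%:R + b 0 1 * a 2%:R 3%:R - a 0 2%:R * b 1 3%:R - b 0 2%:R * a 1 3%:R
  + a 0 3%:R * b 1 2%:R + b 0 3%:R * a 1 2%:R.

Lemma pfD (a b : 'M[C]_4) : pf (a + b) = pf a + pf b + pf_polar a b.
Proof. by rewrite /pf /pf_polar !mxE; ring. Qed.

Definition mx_of_cols (u1 u2 u3 u4 : vec) : 'M[C]_4 :=
  \matrix_(i, k) [:: u1 i 0; u2 i 0; u3 i 0; u4 i 0]`_k.

Lemma mx_of_colsM u1 u2 u3 u4 (c : vec) : mx_of_cols u1 u2 u3 u4 *m c =
  c 0 0 *: u1 + c 1 0 *: u2 + c 2%:R 0 *: u3 + c 3%:R 0 *: u4.
Proof. by apply/matrixP=> i j; rewrite (ord1 j) !mxE sum_ord4 !mxE /=; ring. Qed.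

Lemma det_mx_of_cols (u1 u2 u3 u4 : vec) :
  \det (mx_of_cols u1 u2 u3 u4) = pf_polar (wedge u1 u2) (wedge u3 u4).
Proof.
(* Indexing by [nat] lets [/=] evaluate the lifted indices of the cofactor expansion. *)
pose rows := [:: [:: u1 0 0; u2 0 0; u3 0 0; u4 0 0]; [:: u1 1 0; u2 1 0; u3 1 0; u4 1 0];
  [:: u1 2%:R 0; u2 2%:R 0; u3 2%:R 0; u4 2%:R 0];
  [:: u1 3%:R 0; u2 3%:R 0; u3 3%:R 0; u4 3%:R 0]].
have -> : mx_of_cols u1 u2 u3 u4 = \matrix_(i, k) (nth [::] rows i)`_k.
  by apply/matrixP; apply: ord4_cases; apply: ord4_cases; rewrite !mxE.
rewrite (expand_det_row _ ord0) /cofactor !big_ord_recl big_ord0.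
rewrite !(@expand_det_row _ 3 _ ord0) /cofactor !big_ord_recl !big_ord0.
rewrite !(@expand_det_row _ 2 _ ord0) /cofactor !big_ord_recl !big_ord0 !det_mx11.
by rewrite /pf_polar !wedgeE !mxE /=; ring.
Qed.

Lemma det_mx_of_cols_eq0 u1 u2 u3 u4 : \det (mx_of_cols u1 u2 u3 u4) = 0 ->
  exists m1 m2 m3 m4 : C, ~~ [&& m1 == 0, m2 == 0, m3 == 0 & m4 == 0] /\
    m1 *: u1 + m2 *: u2 + m3 *: u3 + m4 *: u4 = 0.
Proof.
rewrite -det_tr => /eqP /det0P [m m_neq0 dep].
exists (m 0 0), (m 0 1), (m 0 2%:R), (m 0 3%:R); split.
  apply: contra m_neq0 => /and4P [/eqP m0 /eqP m1 /eqP m2 /eqP m3].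
  by apply/eqP/matrixP=> i; apply: ord4_cases; rewrite (ord1 i) mxE.
by have := congr1 trmx dep; rewrite trmx_mul trmxK trmx0 mx_of_colsM !mxE.
Qed.

Lemma mx_of_cols_unit u1 u2 u3 u4 : indep4 u1 u2 u3 u4 -> mx_of_cols u1 u2 u3 u4 \in unitmx.
Proof.
move=> u_indep; rewrite unitmxE unitfE -det_tr; apply/negP => /det0P [m m_neq0 dep].
have := congr1 trmx dep; rewrite trmx_mul trmxK trmx0 mx_of_colsM !mxE.
move/u_indep => [m0 m1 m2 m3]; move/eqP: m_neq0; apply.
by apply/matrixP=> i; apply: ord4_cases; rewrite (ord1 i) !mxE.
Qed.

End Wedge.

Section Spheres.
Variable C : numClosedFieldType.
Local Notation vec := 'cV[C]_4.
Local Notation J := (@Jv C).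

Definition qcomb (x z : vec) (c0 c1 c2 c3 : C) : vec :=
  c0 *: x + c1 *: J x + c2 *: z + c3 *: J z.

Definition vec4 (c0 c1 c2 c3 : C) : vec := \col_i [:: c0; c1; c2; c3]`_i.

Definition qbasis_mx (x z : vec) := mx_of_cols x (J x) z (J z).

Definition diag_i : 'M[C]_4 := diag_mx (\row_i [:: 'i; - 'i; 'i; - 'i]`_i).

(* Right multiplication by i on the C-span of x, z; by -i on that of xj, zj. *)
Definition sph_mx (x z : vec) := qbasis_mx x z *m diag_i *m invmx (qbasis_mx x z).

Lemma qbasis_mx_vec4 x z c0 c1 c2 c3 :
  qbasis_mx x z *m vec4 c0 c1 c2 c3 = qcomb x z c0 c1 c2 c3.
Proof. by rewrite mx_of_colsM !mxE. Qed.

Lemma diag_i_vec4 c0 c1 c2 c3 :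
  diag_i *m vec4 c0 c1 c2 c3 = vec4 ('i * c0) (- 'i * c1) ('i * c2) (- 'i * c3).
Proof. by apply/matrixP=> i j; rewrite mul_diag_mx !mxE; elim/ord4_cases: i. Qed.

Lemma Jv_qcomb x z c0 c1 c2 c3 :
  J (qcomb x z c0 c1 c2 c3) = qcomb x z (- c1^*) (c0^*) (- c3^*) (c2^*).
Proof. by rewrite /qcomb !JvD !JvZ !JvK; entrywise. Qed.

Section QuaternionicBasis.
Variables x z : vec.
Hypothesis xz_indep : indep4 x (J x) z (J z).

Lemma qcomb_surj v : exists c0 c1 c2 c3, v = qcomb x z c0 c1 c2 c3.
Proof.
have B_unit : qbasis_mx x z \in unitmx by apply: mx_of_cols_unit.
set c := invmx (qbasis_mx x z) *m v.
exists (c 0 0), (c 1 0), (c 2%:R 0), (c 3%:R 0).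
by rewrite -[LHS](mulKVmx B_unit) -/c mx_of_colsM.
Qed.

Lemma qcomb_inj c0 c1 c2 c3 d0 d1 d2 d3 :
  qcomb x z c0 c1 c2 c3 = qcomb x z d0 d1 d2 d3 ->
  [/\ c0 = d0, c1 = d1, c2 = d2 & c3 = d3].
Proof.
move=> eq_cd.
have [] : [/\ c0 - d0 = 0, c1 - d1 = 0, c2 - d2 = 0 & c3 - d3 = 0].
  apply: xz_indep; rewrite (_ : _ + _ = qcomb x z c0 c1 c2 c3 - qcomb x z d0 d1 d2 d3).
    by rewrite eq_cd subrr.
  by rewrite /qcomb; entrywise.
by move=> /subr0_eq -> /subr0_eq -> /subr0_eq -> /subr0_eq ->.
Qed.

Lemma sph_mx_qcomb c0 c1 c2 c3 :
  sph_mx x z *m qcomb x z c0 c1 c2 c3 = qcomb x z ('i * c0) (- 'i * c1) ('i * c2) (- 'i * c3).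
Proof.
have B_unit : qbasis_mx x z \in unitmx by apply: mx_of_cols_unit.
rewrite -!qbasis_mx_vec4 /sph_mx -!mulmxA (mulmxA (invmx _)) (mulVmx B_unit) mul1mx.
by rewrite diag_i_vec4.
Qed.

Lemma sph_mx_sphere : sphere (sph_mx x z).
Proof.
split.
  apply/hlinearP => v; have [c0 [c1 [c2 [c3 ->]]]] := qcomb_surj v.
  have conjM (a b : C) : (a * b)^* = a^* * b^* by exact: rmorphM.
  have conjN (a : C) : (- a)^* = - a^* by exact: rmorphN.
  rewrite Jv_qcomb !sph_mx_qcomb Jv_qcomb !conjM !conjN conjCi.
  by congr qcomb; ring.
apply: mulmx_cV_ext => v; have [c0 [c1 [c2 [c3 ->]]]] := qcomb_surj v.
rewrite -mulmxA !sph_mx_qcomb mulNmx mul1mx.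
rewrite (_ : - qcomb x z c0 c1 c2 c3 = qcomb x z (- c0) (- c1) (- c2) (- c3)).
  by congr qcomb; rewrite mulrA ?mulrNN -expr2 sqrCi mulN1r.
by rewrite /qcomb; entrywise.
Qed.

Lemma sph_mx_eigen u : sph_mx x z *m u = rmul u (qi C) <-> span2 x z u.
Proof.
rewrite rmul_qi; split=> [|[a [b ->]]]; last first.
  rewrite (_ : a *: x + b *: z = qcomb x z a 0 b 0); last by rewrite /qcomb; entrywise.
  by rewrite sph_mx_qcomb /qcomb; entrywise.
have [c0 [c1 [c2 [c3 ->]]]] := qcomb_surj u.
rewrite sph_mx_qcomb (_ : 'i *: _ = qcomb x z ('i * c0) ('i * c1) ('i * c2) ('i * c3)).
  move/qcomb_inj => [_ c1E _ c3E].
  have i_neq0 : 'i != 0 :> C by rewrite -normr_eq0 normCi oner_eq0.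
  have coef0 (c : C) : - 'i * c = 'i * c -> c = 0.
    move/eqP; rewrite -subr_eq0 -mulrBl mulf_eq0 -opprD oppr_eq0 -mulr2n mulrn_eq0.
    by rewrite (negbTE i_neq0) /= => /eqP.
  by exists c0, c2; rewrite /qcomb (coef0 _ c1E) (coef0 _ c3E) !scale0r !addr0.
by rewrite /qcomb; entrywise.
Qed.

Lemma sph_mx_x : sph_mx x z *m x = 'i *: x.
Proof.
rewrite -rmul_qi; apply/sph_mx_eigen.
by exists 1, 0; rewrite scale1r scale0r addr0.
Qed.

Lemma sph_mx_Jx : sph_mx x z *m J x = - 'i *: J x.
Proof.
have [/hlinearP S_J _] := sph_mx_sphere.
by rewrite S_J sph_mx_x JvZ conjCi.
Qed.

Lemma indep4_indep2 : indep2 x z.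
Proof.
move=> a b dep; have [] := @xz_indep a 0 b 0; first by rewrite !scale0r !addr0 dep.
by move=> -> _ -> _.
Qed.

Lemma sph_mx_twlift : twlift (sph_mx x z) (wedge x z).
Proof.
exists x, z; split; [exact: indep4_indep2 | exact: sph_mx_eigen |].
split; first exact/wedge_neq0P/indep4_indep2.
by exists 1; rewrite scale1r oner_eq0.
Qed.

Lemma sph_mx_unique (S : 'M[C]_4) : hlinear S ->
  S *m x = 'i *: x -> S *m z = 'i *: z -> S = sph_mx x z.
Proof.
move=> /hlinearP S_J Sx Sz; apply: mulmx_cV_ext => v.
have [c0 [c1 [c2 [c3 ->]]]] := qcomb_surj v.
rewrite sph_mx_qcomb /qcomb !mulmxDr -!scalemxAr !S_J Sx Sz !JvZ conjCi.
by entrywise.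
Qed.

Lemma twlift_sph_mx (S : 'M[C]_4) : sphere S -> twlift S (wedge x z) -> S = sph_mx x z.
Proof.
move=> [S_hlin _] [v [w [_ S_eigen [xz_neq0 [k [_ xz_vw]]]]]].
have [a [b xE]] : span2 (k *: v) w x.
  by apply: (wedge_eq_span _ xz_neq0); rewrite xz_vw wedgeZl.
have [a' [b' zE]] : span2 w (k *: v) z.
  have zx_neq0 : wedge z x != 0 by rewrite wedgeC oppr_eq0.
  by apply: (wedge_eq_span _ zx_neq0); rewrite (wedgeC x) xz_vw wedgeZr (wedgeC v) scalerN.
apply: sph_mx_unique => //; rewrite -rmul_qi; apply/S_eigen.
  by exists (a * k), b; rewrite xE scalerA.
by exists (b' * k), a'; rewrite zE scalerA addrC.
Qed.

End QuaternionicBasis.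

(* Applying S twice to Sw = wi + x g + xj k gives -w + 2 i g x. *)
Lemma sphere_eigen_defect (S : 'M[C]_4) (x w : vec) g k : sphere S -> x != 0 ->
  S *m x = 'i *: x -> S *m J x = - 'i *: J x ->
  S *m w = 'i *: w + g *: x + k *: J x -> g = 0.
Proof.
move=> [_ S_sqr] x_neq0 Sx SJx Sw.
have := congr1 (mulmx^~ w) S_sqr; rewrite /= -mulmxA Sw !mulmxDr -!scalemxAr Sw Sx SJx.
rewrite mulNmx mul1mx => /eqP; rewrite -subr_eq0.
rewrite (_ : _ - _ = (('i * 'i + 1) *: w + (2%:R * 'i * g) *: x)); last by entrywise.
rewrite -expr2 sqrCi addNr scale0r add0r scaler_eq0 (negbTE x_neq0) orbF !mulf_eq0.
by rewrite pnatr_eq0 -normr_eq0 normCi oner_eq0 /= => /eqP.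
Qed.

End Spheres.

Section NullLine.
Variable C : numClosedFieldType.
Local Notation vec := 'cV[C]_4.
Local Notation J := (@Jv C).

Lemma null_line_sym (a b : 'M[C]_4) : null_line a b -> null_line b a.
Proof.
case=> sk_a sk_b ab_indep pf0; split=> // [s t|s t]; last by rewrite addrC.
by rewrite addrC => /ab_indep [-> ->].
Qed.

Lemma null_line_pf_polar (a b : 'M[C]_4) : null_line a b -> pf_polar a b = 0.
Proof.
case=> _ _ _ pf0.
have pf_a : pf a = 0 by have := pf0 1 0; rewrite scale1r scale0r addr0.
have pf_b : pf b = 0 by have := pf0 0 1; rewrite scale1r scale0r add0r.
by have := pf0 1 1; rewrite !scale1r pfD pf_a pf_b !add0r.
Qed.

Lemma null_line_rebase_l (a b pi : 'M[C]_4) x0 y0 : null_line a b ->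
  pi = x0 *: a + y0 *: b -> y0 != 0 ->
  null_line pi a /\ forall g, span2 a b g <-> span2 pi a g.
Proof.
move=> [sk_a sk_b ab_indep pf0] piE y0_neq0; split; first split=> //.
- by rewrite /Defs.skew piE linearD !linearZ /= sk_a sk_b !scalerN opprD.
- move=> s t; rewrite piE => dep.
  have [coef_a /eqP] : s * x0 + t = 0 /\ s * y0 = 0.
    by apply: ab_indep; rewrite -dep; entrywise.
  rewrite mulf_eq0 (negbTE y0_neq0) orbF => /eqP s0.
  by move: coef_a; rewrite s0 mul0r add0r.
- by move=> s t; rewrite piE (_ : _ + _ = (s * x0 + t) *: a + (s * y0) *: b) //; entrywise.
move=> g; split=> [[s [t ->]]|[s [t ->]]].
  exists (t / y0), (s - t * x0 / y0); rewrite piE; apply/matrixP=> ? ?; rewrite !mxE.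
  by field.
by exists (s * x0 + t), (s * y0); rewrite piE; entrywise.
Qed.

Lemma null_line_rebase (a b pi : 'M[C]_4) : null_line a b -> onN a b pi ->
  exists c, null_line pi c /\ forall g, span2 a b g <-> span2 pi c g.
Proof.
move=> ab_null [pi_neq0 [x0 [y0 piE]]].
have [y0_0|y0_neq0] := eqVneq y0 0; last first.
  by exists a; apply: null_line_rebase_l ab_null piE y0_neq0.
have x0_neq0 : x0 != 0.
  by apply: contra pi_neq0 => /eqP x0_0; rewrite piE x0_0 y0_0 !scale0r addr0.
have [pib_null span_baE] :=
  null_line_rebase_l (null_line_sym ab_null) (etrans piE (addrC _ _)) x0_neq0.
exists b; split=> // g; rewrite -span_baE.
by split=> [[s [t ->]]|[s [t ->]]]; exists t, s; rewrite addrC.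
Qed.

(* The polar form is the determinant of (p, pj, u, w); a linear dependency gives a
   common point x of pH and of the span of u, w. *)
Lemma pf_polar_wedge_meet (p u w : vec) : p != 0 -> wedge u w != 0 ->
  pf_polar (wedge p (J p)) (wedge u w) = 0 ->
  exists m1 m2 y, m1 * m1^* + m2 * m2^* != 0 /\ wedge u w = wedge (m1 *: p + m2 *: J p) y.
Proof.
move=> p_neq0 uw_neq0; rewrite -det_mx_of_cols => /det_mx_of_cols_eq0.
move=> [m1 [m2 [m3 [m4 [m_neq0 dep]]]]].
have uw_indep := proj2 (wedge_neq0P u w) uw_neq0.
set x := m1 *: p + m2 *: J p.
have xE : x = - (m3 *: u + m4 *: w) by apply/eqP; rewrite -addr_eq0 /x !addrA dep.
have m12_neq0 : (m1 != 0) || (m2 != 0).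
  apply: contraLR m_neq0; rewrite negb_or !negbK => /andP [/eqP m10 /eqP m20].
  move: dep; rewrite m10 m20 !scale0r !add0r => /uw_indep [-> ->].
  by rewrite !eqxx.
have x_neq0 : x != 0.
  apply/eqP => /(Jv_indep p_neq0) [m10 m20].
  by move: m12_neq0; rewrite m10 m20 eqxx.
exists m1, m2.
have m_normsq : m1 * m1^* + m2 * m2^* != 0.
  by apply/eqP => /normsq2_eq0 [m10 m20]; move: m12_neq0; rewrite m10 m20 eqxx.
have [m30|m3_neq0] := eqVneq m3 0.
  have m4_neq0 : m4 != 0.
    by apply: contra x_neq0 => /eqP m40; rewrite xE m30 m40 !scale0r addr0 oppr0.
  exists (m4^-1 *: u); split=> //; rewrite -/x xE m30.
  by apply/matrixP=> ? ?; rewrite !(wedgeE, mxE); field.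
exists (- m3^-1 *: w); split=> //; rewrite -/x xE.
by apply/matrixP=> ? ?; rewrite !(wedgeE, mxE); field.
Qed.

Lemma wedge_qcomb_Jv (p : vec) m1 m2 :
  wedge (m1 *: p + m2 *: J p) (J (m1 *: p + m2 *: J p))
  = (m1 * m1^* + m2 * m2^*) *: wedge p (J p).
Proof. by rewrite JvD !JvZ JvK; entrywise. Qed.

Lemma hline_span (p x : vec) m1 m2 : x = m1 *: p + m2 *: J p ->
  m1 * m1^* + m2 * m2^* != 0 -> forall u, hline p u <-> span2 x (J x) u.
Proof.
move=> xE m_neq0 u; have JxE : J x = m1^* *: J p - m2^* *: p.
  by rewrite xE JvD !JvZ JvK scalerN.
split=> [[q ->]|[c [d ->]]].
  exists ((q.1 * m1^* + q.2^* * m2^*) / (m1 * m1^* + m2 * m2^*)).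
  exists ((q.2^* * m1 - q.1 * m2) / (m1 * m1^* + m2 * m2^*)).
  by rewrite rmulE JxE xE; apply/matrixP=> ? ?; rewrite !mxE; field.
exists (c * m1 - d * m2^*, (c * m2 + d * m1^*)^*).
by rewrite rmulE conjCK /= JxE xE; entrywise.
Qed.

Lemma indep4_of_wedge_indep (x y : vec) :
  indep2 (wedge x (J x)) (wedge x y) -> indep4 x (J x) y (J y).
Proof.
move=> w_indep n1 n2 n3 n4 dep.
have x_neq0 : x != 0.
  apply/eqP => x0; have wedge0 (v : vec) : wedge 0 v = 0 by entrywise.
  have [/eqP] : (1 : C) = 0 /\ (0 : C) = 0.
    by apply: w_indep; rewrite x0 !wedge0 !scaler0 addr0.
  by rewrite oner_eq0.
case: (boolP [&& n1 == 0, n2 == 0, n3 == 0 & n4 == 0]).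
  by case/and4P => /eqP -> /eqP -> /eqP -> /eqP ->.
move=> n_neq0; have [s [t yE]] := dependent4_span x_neq0 n_neq0 dep.
have [_ /eqP] : t = 0 /\ (-1 : C) = 0.
  apply: w_indep; rewrite yE wedgeDr !wedgeZr wedgexx scaler0 add0r.
  by rewrite scaleN1r subrr.
by rewrite oppr_eq0 oner_eq0.
Qed.

Lemma null_line_normal_form (a b : 'M[C]_4) (p : vec) :
  null_line a b -> p != 0 -> onN a b (wedge p (J p)) ->
  exists (x y : vec) (k : C), [/\ wedge x (J x) = k *: wedge p (J p),
    forall u, hline p u <-> span2 x (J x) u, indep4 x (J x) y (J y)
    & forall g, span2 a b g <-> exists s t, g = wedge x (s *: J x + t *: y)].
Proof.
move=> ab_null p_neq0 pi_on.
have [c [pic_null spanE]] := null_line_rebase ab_null pi_on.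
have [_ sk_c pic_indep pf0] := pic_null.
have pf_c : pf c = 0 by have := pf0 0 1; rewrite scale0r scale1r add0r.
have c_neq0 : c != 0.
  apply/eqP => c0; have [_ /eqP] : (0 : C) = 0 /\ (1 : C) = 0.
    by apply: pic_indep; rewrite c0 scale0r scaler0 addr0.
  by rewrite oner_eq0.
have [u [w cE]] := pf0_wedge sk_c pf_c c_neq0.
have uw_neq0 : wedge u w != 0 by rewrite -cE.
have pf_polar0 : pf_polar (wedge p (J p)) (wedge u w) = 0.
  by rewrite -cE; exact: null_line_pf_polar.
have [m1 [m2 [y [m_neq0 uwE]]]] := pf_polar_wedge_meet p_neq0 uw_neq0 pf_polar0.
set x := m1 *: p + m2 *: J p in uwE; set k := m1 * m1^* + m2 * m2^* in m_neq0.
have xJxE : wedge x (J x) = k *: wedge p (J p) by exact: wedge_qcomb_Jv.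
have cE' : c = wedge x y by rewrite cE uwE.
exists x, y, k; split=> //.
- exact: hline_span.
- apply: indep4_of_wedge_indep => s t; rewrite xJxE -cE' scalerA => /pic_indep [/eqP].
  by rewrite mulf_eq0 (negbTE m_neq0) orbF => /eqP.
move=> g; rewrite spanE; split=> [[s [t ->]]|[s [t ->]]].
  exists (s / k), t; by rewrite wedgeDr !wedgeZr xJxE -cE' scalerA mulfVK.
by exists (s * k), t; rewrite wedgeDr !wedgeZr xJxE -cE' scalerA.
Qed.

End NullLine.

Section Pencil.
Variable C : numClosedFieldType.
Local Notation vec := 'cV[C]_4.
Local Notation J := (@Jv C).

Variables (a b : 'M[C]_4) (p x y : vec) (k : C).
Hypotheses (p_neq0 : p != 0)
  (wedge_xJx : wedge x (J x) = k *: wedge p (J p))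
  (hline_pE : forall u, hline p u <-> span2 x (J x) u)
  (xy_indep : indep4 x (J x) y (J y))
  (span_abE : forall g, span2 a b g <-> exists s t, g = wedge x (s *: J x + t *: y)).

Local Notation z s t := (s *: J x + t *: y).

Lemma pencil_indep4 s t : t != 0 -> indep4 x (J x) (z s t) (J (z s t)).
Proof.
move=> t_neq0 n1 n2 n3 n4; rewrite JvD !JvZ JvK => dep.
have [e1 e2 /eqP e3 /eqP e4] :
    [/\ n1 - n4 * s^* = 0, n2 + n3 * s = 0, n3 * t = 0 & n4 * t^* = 0].
  by apply: xy_indep; rewrite -dep; entrywise.
move: e3 e4; rewrite !mulf_eq0 conjC_eq0 (negbTE t_neq0) !orbF => /eqP n30 /eqP n40.
by move: e1 e2; rewrite n30 n40 !mul0r subr0 addr0.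
Qed.

Lemma pencil_real s : wedge x (z s 0) != 0 -> is_real_pt (wedge x (z s 0)).
Proof.
rewrite scale0r addr0 wedgeZr => g_neq0.
have s_neq0 : s != 0 by apply: contra g_neq0 => /eqP ->; rewrite scale0r.
have xJx_neq0 : wedge x (J x) != 0 by apply: contra g_neq0 => /eqP ->; rewrite scaler0.
have realE : realstr (s *: wedge x (J x)) = s^* *: wedge x (J x).
  by rewrite realstrZ realstr_wedge JvK wedgeNr wedgeC opprK.
split; first by rewrite realE scaler_eq0 negb_or conjC_eq0 s_neq0 xJx_neq0.
exists (s^* / s); split; first by rewrite mulf_eq0 negb_or conjC_eq0 s_neq0 invr_eq0 s_neq0.
by rewrite realE scalerA mulfVK.
Qed.

Lemma onN_pencil s t : t != 0 -> onN a b (wedge x (z s t)).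
Proof.
move=> t_neq0; split; last by apply/span_abE; exists s, t.
exact/wedge_neq0P/indep4_indep2/pencil_indep4.
Qed.

Lemma onN_nonreal g : onN a b g -> ~ is_real_pt g ->
  exists s t, t != 0 /\ g = wedge x (z s t).
Proof.
move=> [g_neq0 /span_abE [s [t gE]]] g_nonreal; exists s, t; split=> //.
apply/negP => /eqP t0; apply: g_nonreal; rewrite gE t0 in g_neq0 *.
exact: pencil_real.
Qed.

Lemma twlift_nonreal g S : onN a b g -> ~ is_real_pt g -> sphere S -> twlift S g ->
  exists s t, t != 0 /\ S = sph_mx x (z s t).
Proof.
move=> g_on g_nonreal S_sph S_tw.
have [s [t [t_neq0 gE]]] := onN_nonreal g_on g_nonreal.
exists s, t; split=> //; apply: (twlift_sph_mx (@pencil_indep4 s t t_neq0) S_sph).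
by rewrite -gE.
Qed.

Lemma through_sph_mx w : indep4 x (J x) w (J w) -> through (sph_mx x w) p.
Proof.
move=> xw_indep u; rewrite hline_pE.
have Sx := sph_mx_x xw_indep; have SJx := sph_mx_Jx xw_indep.
split=> [[c [d ->]]|[v [/hline_pE [c [d ->]] ->]]].
  exists ((- 'i * c) *: x + ('i * d) *: J x); split.
    by apply/hline_pE; do 2 eexists.
  have iiK (e : C) : - ('i * 'i) * e = e by rewrite -expr2 sqrCi opprK mul1r.
  rewrite mulmxDr -!scalemxAr Sx SJx !scalerA -[c in LHS]iiK -[d in LHS]iiK.
  by congr (_ *: _ + _ *: _); ring.
exists ('i * c), (- 'i * d).
by rewrite mulmxDr -!scalemxAr Sx SJx !scalerA; congr (_ *: _ + _ *: _); ring.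
Qed.

Lemma span_xJx_rmul u q : span2 x (J x) u -> span2 x (J x) (rmul u q).
Proof.
move=> [c [d ->]]; exists (q.1 * c - q.2^* * d^*), (q.1 * d + q.2^* * c^*).
by rewrite rmulE JvD !JvZ JvK; entrywise.
Qed.

Lemma hbasis_pencil w : indep4 x (J x) w (J w) -> hbasis p w.
Proof.
move=> xw_indep u; have [c0 [c1 [c2 [c3 uE]]]] := qcomb_surj xw_indep u.
have [q1 q1E] : hline p (c0 *: x + c1 *: J x) by apply/hline_pE; do 2 eexists.
exists (q1, (c2, c3^*)); split.
  by rewrite /= -q1E rmulE /= conjCK uE /qcomb addrA.
move=> [q1' q2'] /= u_eq.
have [c0' [c1' q1'E]] : span2 x (J x) (rmul p q1') by apply/hline_pE; exists q1'.
have : qcomb x w c0 c1 c2 c3 = qcomb x w c0' c1' q2'.1 q2'.2^*.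
  by rewrite -uE u_eq q1'E rmulE /qcomb; entrywise.
move/(qcomb_inj xw_indep) => [c0E c1E c2E c3E]; congr pair.
  by apply: (rmul_inj p_neq0); rewrite -q1E q1'E c0E c1E.
by case: q2' c2E c3E {u_eq} => [e f] /= -> ->; rewrite conjCK.
Qed.

Lemma touches_pencil s t s' t' : t != 0 -> t' != 0 ->
  touches (sph_mx x (z s t)) (sph_mx x (z s' t')) p.
Proof.
(* w = (t / t') w' + e xj, so the two spheres differ on w by a multiple of xj. *)
move=> t_neq0 t'_neq0.
have xw_indep := @pencil_indep4 s t t_neq0; have xw'_indep := @pencil_indep4 s' t' t'_neq0.
set w := z s t in xw_indep *; set w' := z s' t' in xw'_indep *.
exists w; split; first exact: hbasis_pencil.
have [c [d pE]] : span2 x (J x) p.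
  by apply/hline_pE; exists (1, 0); rewrite rmulE /= conjC0 scale0r addr0 scale1r.
have pE' v : p = qcomb x v c d 0 0 by rewrite /qcomb pE !scale0r !addr0.
have [R RE] : hline p (('i * c) *: x + (- 'i * d) *: J x) by apply/hline_pE; do 2 eexists.
pose e := s - t * s' / t'.
have wE : w = qcomb x w' 0 e (t / t') 0.
  by rewrite /qcomb /w /w' /e; apply/matrixP=> ? ?; rewrite !mxE; field.
have [H' H'E] : hline p ((- 'i * e - 'i * e) *: J x).
  by apply/hline_pE; exists 0; eexists; rewrite scale0r add0r.
exists R, (qi C), (0, 0), H'; split.
- by rewrite -RE {1}(pE' w) sph_mx_qcomb // /qcomb !mulr0 !scale0r !addr0.
- rewrite rmul_qi (_ : rmul p (0, 0) = 0); last by rewrite rmulE /= conjC0 !scale0r addr0.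
  rewrite add0r -rmul_qi; apply/sph_mx_eigen => //.
  by exists 0, 1; rewrite scale0r add0r scale1r.
- by rewrite -RE {1}(pE' w') sph_mx_qcomb // /qcomb !mulr0 !scale0r !addr0.
- by rewrite rmul_qi -H'E {1}wE sph_mx_qcomb // wE /qcomb; entrywise.
Qed.

(* S' agrees with the sphere on pH, and by the touching condition also on w up to an
   element of pH = span(x, xj), whose x-component vanishes by [sphere_eigen_defect]. *)
Lemma touches_sph_mx_eigen w (S' : 'M[C]_4) : indep4 x (J x) w (J w) -> sphere S' ->
  touches (sph_mx x w) S' p ->
  [/\ S' *m x = 'i *: x, S' *m J x = - 'i *: J x & exists h, S' *m w = 'i *: w + h *: J x].
Proof.
move=> xw_indep S'_sph [e [pe_basis [R [N [H [H' [Sp Se S'p S'e]]]]]]].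
set S := sph_mx x w in Sp Se *.
have [S_hlin _] := sph_mx_sphere xw_indep; have [S'_hlin _] := S'_sph.
have agree u : hline p u -> S' *m u = S *m u.
  by apply: hlinear_hline_agree => //; rewrite S'p Sp.
have S'x : S' *m x = 'i *: x.
  rewrite agree ?sph_mx_x //; apply/hline_pE.
  by exists 1, 0; rewrite scale1r scale0r addr0.
have S'Jx : S' *m J x = - 'i *: J x.
  rewrite agree ?sph_mx_Jx //; apply/hline_pE.
  by exists 0, 1; rewrite scale1r scale0r add0r.
have Sw : S *m w = 'i *: w.
  rewrite -rmul_qi; apply/sph_mx_eigen => //.
  by exists 0, 1; rewrite scale0r add0r scale1r.
have [g [h S'w]] : exists g h, S' *m w = 'i *: w + g *: x + h *: J x.
  have [[q1 q2] [wE _]] := pe_basis w; rewrite /= in wE.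
  have [g [h diffE]] : span2 x (J x) (rmul (rmul p H' - rmul p H) q2).
    apply: span_xJx_rmul.
    have [c [d ->]] : span2 x (J x) (rmul p H') by apply/hline_pE; exists H'.
    have [c' [d' ->]] : span2 x (J x) (rmul p H) by apply/hline_pE; exists H.
    by exists (c - c'), (d - d'); entrywise.
  exists g, h; rewrite -addrA -diffE -Sw wE (mulmxDr S') (mulmxDr S).
  rewrite !S'_hlin !S_hlin S'p Sp S'e Se.
  rewrite -(addrA (rmul (rmul p R) q1)) -(rmulDl (rmul p H + rmul e N)).
  by rewrite (addrAC (rmul p H)) (subrKC (rmul p H)).
split=> //; exists h.
by rewrite S'w (sphere_eigen_defect S'_sph (indep4_neq0 xy_indep) S'x S'Jx S'w) scale0r addr0.
Qed.

Lemma touches_pencil_sph_mx s t (S' : 'M[C]_4) : t != 0 -> sphere S' ->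
  touches (sph_mx x (z s t)) S' p -> exists s' t', t' != 0 /\ S' = sph_mx x (z s' t').
Proof.
move=> t_neq0 S'_sph touch; have [S'_hlin _] := S'_sph.
have [S'x S'Jx [h S'w]] := touches_sph_mx_eigen (@pencil_indep4 s t t_neq0) S'_sph touch.
pose beta := - 'i * h / 2%:R.
exists (s + beta), t; split=> //.
apply: (sph_mx_unique (@pencil_indep4 (s + beta) t t_neq0) S'_hlin S'x).
rewrite (_ : z (s + beta) t = z s t + beta *: J x); last by entrywise.
rewrite mulmxDr -scalemxAr S'w S'Jx.
(* beta is chosen so that the xj-components cancel *)
apply/subr0_eq; rewrite (_ : _ - _ = (('i * 'i + 1) * h) *: J x).
  by rewrite -expr2 sqrCi addNr mul0r scale0r.
by rewrite /beta; apply/matrixP=> ? ?; rewrite !mxE; field.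
Qed.

Lemma pencil_spheres_through g : onN a b g -> ~ is_real_pt g ->
  (exists S, sphere S /\ twlift S g) /\ (forall S, sphere S -> twlift S g -> through S p).
Proof.
move=> g_on g_nonreal; split.
  have [s [t [t_neq0 ->]]] := onN_nonreal g_on g_nonreal.
  have xw_indep := @pencil_indep4 s t t_neq0.
  by exists (sph_mx x (z s t)); split; [exact: sph_mx_sphere | exact: sph_mx_twlift].
move=> S S_sph S_tw; have [s [t [t_neq0 ->]]] := twlift_nonreal g_on g_nonreal S_sph S_tw.
exact/through_sph_mx/pencil_indep4.
Qed.

Lemma pencil_spheres_touch g g' S S' :
  onN a b g -> ~ is_real_pt g -> onN a b g' -> ~ is_real_pt g' ->
  sphere S -> twlift S g -> sphere S' -> twlift S' g' -> touches S S' p.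
Proof.
move=> g_on g_nonreal g'_on g'_nonreal S_sph S_tw S'_sph S'_tw.
have [s [t [t_neq0 ->]]] := twlift_nonreal g_on g_nonreal S_sph S_tw.
have [s' [t' [t'_neq0 ->]]] := twlift_nonreal g'_on g'_nonreal S'_sph S'_tw.
exact: touches_pencil.
Qed.

Lemma touching_sphere_onN g S S' : onN a b g -> ~ is_real_pt g -> sphere S -> twlift S g ->
  sphere S' -> touches S S' p -> exists g', onN a b g' /\ twlift S' g'.
Proof.
move=> g_on g_nonreal S_sph S_tw S'_sph touch.
have [s [t [t_neq0 SE]]] := twlift_nonreal g_on g_nonreal S_sph S_tw.
rewrite SE in touch.
have [s' [t' [t'_neq0 ->]]] := touches_pencil_sph_mx t_neq0 S'_sph touch.
exists (wedge x (z s' t')); split; first exact: onN_pencil.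
exact/sph_mx_twlift/pencil_indep4.
Qed.

Lemma onN_real_or_touching g S g' : onN a b g -> ~ is_real_pt g -> sphere S -> twlift S g ->
  onN a b g' ->
  proj_eq g' (wedge p (J p)) \/ exists S', [/\ sphere S', touches S S' p & twlift S' g'].
Proof.
move=> g_on g_nonreal S_sph S_tw [g'_neq0 /span_abE [s' [t' g'E]]].
have [t'0|t'_neq0] := eqVneq t' 0.
  have g'E' : g' = (s' * k) *: wedge p (J p).
    by rewrite g'E t'0 scale0r addr0 wedgeZr wedge_xJx scalerA.
  left; split=> //; exists (s' * k); split=> //.
  by apply: contra g'_neq0 => /eqP sk0; rewrite g'E' sk0 scale0r.
have [s [t [t_neq0 ->]]] := twlift_nonreal g_on g_nonreal S_sph S_tw.
have xw'_indep := @pencil_indep4 s' t' t'_neq0.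
right; exists (sph_mx x (z s' t')); split; first exact: sph_mx_sphere.
  exact: touches_pencil.
by rewrite g'E; exact: sph_mx_twlift.
Qed.

End Pencil.

Theorem mainTheorem10 (C : numClosedFieldType) (a b : 'M[C]_4) (p : 'cV[C]_4) :
  null_line a b -> p != 0 -> onN a b (wedge p (Jv p)) ->
  [/\ (forall g, onN a b g -> ~ is_real_pt g ->
         (exists S, sphere S /\ twlift S g) /\
         (forall S, sphere S -> twlift S g -> through S p)),
      (forall g g' S S', onN a b g -> ~ is_real_pt g -> onN a b g' -> ~ is_real_pt g' ->
         sphere S -> twlift S g -> sphere S' -> twlift S' g' -> touches S S' p)
    & (forall g S, onN a b g -> ~ is_real_pt g -> sphere S -> twlift S g ->
         (forall S', sphere S' -> touches S S' p -> exists g', onN a b g' /\ twlift S' g') /\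
         (forall g', onN a b g' ->
            proj_eq g' (wedge p (Jv p)) \/ exists S', [/\ sphere S', touches S S' p & twlift S' g']))].
Proof.
move=> ab_null p_neq0 pi_on.
have [x [y [k [xJxE hline_pE xy_indep span_abE]]]] :=
  null_line_normal_form ab_null p_neq0 pi_on.
split=> [g | g g' S S' | g S g_on g_nonreal S_sph S_tw].
- exact: (pencil_spheres_through hline_pE xy_indep span_abE).
- exact: (pencil_spheres_touch p_neq0 hline_pE xy_indep span_abE).
split=> [S' | g'].
- exact: (touching_sphere_onN hline_pE xy_indep span_abE g_on g_nonreal S_sph S_tw).
- exact: (onN_real_or_touching p_neq0 xJxE hline_pE xy_indep span_abE g_on g_nonreal
            S_sph S_tw).
Qed.
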